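(* Let $\{a_n\}_{n\ge1}$ and $\{b_n\}_{n\ge1}$ be sequences of complex numbers with $a_n\ne0$ for all $n$, and let $w_n(z)$ ($n\ge0$) be the $n$-th approximant of the continued fraction $$\cfrac{a_1}{z+b_1-\cfrac{a_2}{z+b_2-\cfrac{a_3}{z+b_3-\cdots}}},$$ i.e. $w_0=0$ and $w_n(z)=\cfrac{a_1}{z+b_1-\cfrac{a_2}{\ddots-\cfrac{a_n}{z+b_n}}}$. Then: (1) For every $n\ge0$, $w_n(z)$ is a rational function of degree $n$; for $n\ge1$, $w_n(z)\sim\frac{a_1}{z}$ $(z\to\infty)$ and $w_n(z)-w_{n-1}(z)\sim\frac{a_1a_2\cdots a_n}{z^{2n-1}}$ $(z\to\infty)$. In particular $\{w_n(z)-w_{n-1}(z)\}_{n\ge1}$ is an asymptotic sequence at $\infty$. (2) Let $f(z)$ be a complex-valued function defined on an unbounded subset $\mathfrak X$ of $\mathbb C\cup\{\infty\}$. The following are equivalent: (a) $f(z)\sim \cfrac{a_1}{z+b_1-\cfrac{a_2}{z+b_2-\cfrac{a_3}{z+b_3-\cdots}}}$ $(z\to\infty)_{\mathfrak X}$ (asymptotic continued fraction expansion); (b) for every positive integer $n$ one has $f(z)=\cfrac{a_1}{z+b_1-\cfrac{a_2}{\ddots -\cfrac{a_n}{z+b_n-f_n(z)}}}$ for some function $f_n(z)$ with $f_n(z)\sim\frac{a_{n+1}}{z}$ $(z\to\infty)_{\mathfrak X}$; (c) $f(z)-w_n(z)\sim\frac{a_1a_2\cdots a_{n+1}}{z^{2n+1}}$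 $(z\to\infty)_{\mathfrak X}$ for all $n\ge0$; (d) $f(z)-w_n(z)=O(z^{-(2n+1)})$ $(z\to\infty)_{\mathfrak X}$ for all $n\ge0$; (e) $f(z)-w_n(z)=O(z^{-(2n+1)})$ $(z\to\infty)_{\mathfrak X}$ for infinitely many $n\ge0$; (f) for every $n\ge0$, $w_n(z)$ is the unique rational function $w(z)\in\mathbb C(z)$ of degree at most $n$ such that $f(z)-w(z)=O(z^{-(2n+1)})$ $(z\to\infty)_{\mathfrak X}$; (g) for every $n\ge1$, $w_n(z)$ is the unique Padé approximant of $f(z)$ over $\mathfrak X$ at $z=\infty$ of order $[n-1,n]$. (3) If the equivalent conditions in (2) hold, then the best rational approximations of $f(z)$ over $\mathfrak X$ are precisely the approximants $w_n(z)$, $n\ge0$.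
   Context: All asymptotic relations are as $z\to\infty$ within $\mathfrak X$: $f=O(g)$ if $|f|\le M|g|$ on $U\cap\mathfrak X$ for some punctured neighbourhood $U$ of $\infty$ and some $M>0$; $f=o(g)$ if this holds for every $M>0$; $f\sim g$ if $f-g=o(g)$ and $g-f=o(f)$. A sequence $\{\varphi_n\}$ is an asymptotic sequence if $\varphi_{n+1}=o(\varphi_n)$ for all $n$. Asymptotic continued fraction expansion: $f\sim K$ means $\{w_n-w_{n-1}\}_{n\ge1}$ is an asymptotic sequence and $f-w_n=O(w_{n+1}-w_n)$ for all $n\ge0$ (equivalently $f\sim\sum_{n\ge1}(w_n-w_{n-1})$ as an asymptotic expansion of infinite order). The degree of a rational function is the maximum of the degrees of numerator and denominator in lowest terms. A rational function $w\in\mathbb C(z)$ is a best rational approximation of $f$ over $\mathfrak X$ if $w$ is the unique $v\in\mathbb C(z)$ of degree at most $\deg w$ with $f-v=O(f-w)$ $(z\to\infty)_{\mathfrak X}$. The Padé approximant of $f$ over $\mathfrak X$ at $\infty$ of order $[n-1,n]$ is the unique rational function $g(z)/h(z)$ with $g$ a polynomial of degree $\le n-1$ and $h$ a nonzero polynomial of degree $\le n$ such that $f(z)-g(z)/h(z)=O(z^{-(2n+1)})$ $(z\to\infty)_{\mathfrak X}$. *)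

(* complex numbers are R[i] (mathcomp-real-closed) over a
   realType R (mathcomp-analysis reals); rational functions are elements of
   the field of fractions {fraction {poly C}}. *)
From HB Require Import structures.
From mathcomp Require Import all_boot all_order all_algebra.
From mathcomp Require Import fraction reals complex.
From Stdlib Require Import ClassicalEpsilon.
Set Implicit Arguments. Unset Strict Implicit. Unset Printing Implicit Defensive.
Import Order.TTheory GRing.Theory Num.Theory.
Local Open Scope ring_scope.

Notation "x %:F" := (@FracField.tofrac _ x) : ring_scope.

Section Asymptotics.
Variable C : numFieldType.

(* Punctured neighbourhoods of infinity are taken to be { z : n < |z| }, n : nat. *)

Definition bigO (X : C -> Prop) (f g : C -> C) : Prop :=
  exists M : C, 0 < M /\ exists N : nat,
    forall z, X z -> N%:R < `|z| -> `|f z| <= M * `|g z|.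

Definition littleo (X : C -> Prop) (f g : C -> C) : Prop :=
  forall M : C, 0 < M -> exists N : nat,
    forall z, X z -> N%:R < `|z| -> `|f z| <= M * `|g z|.

Definition asym (X : C -> Prop) (f g : C -> C) : Prop :=
  littleo X (fun z => f z - g z) g /\ littleo X (fun z => g z - f z) f.

Definition asym_seq1 (X : C -> Prop) (phi : nat -> C -> C) : Prop :=
  forall n, (0 < n)%N -> littleo X (phi n.+1) (phi n).

Definition unbounded (X : C -> Prop) : Prop :=
  forall N : nat, exists z, X z /\ N%:R < `|z|.
End Asymptotics.

Section ContFrac.
Variable F : fieldType.
(* cfr a b k n t x = a_k / (x + b_k - a_(k+1) / ( ... - a_(k+n-1)/(x + b_(k+n-1) - t)))
   (n levels; cfr a b k 0 t x = t).  Division is MathComp's total division. *)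
Fixpoint cfr (a b : nat -> F) (k n : nat) (t x : F) : F :=
  match n with
  | 0 => t
  | n'.+1 => a k / (x + b k - cfr a b k.+1 n' t x)
  end.
End ContFrac.

Section RatFun.
Variable C : fieldType.
Local Notation RF := {fraction {poly C}}.

Definition lowest_rep (r : RF) (pq : {poly C} * {poly C}) : Prop :=
  pq.2 != 0 /\ coprimep pq.1 pq.2 /\ r = pq.1%:F / pq.2%:F.

Definition lrep (r : RF) : {poly C} * {poly C} :=
  epsilon (inhabits (0, 1)) (lowest_rep r).

Definition rdeg (r : RF) : nat :=
  (maxn (size (lrep r).1) (size (lrep r).2)).-1.

(* the rational function r as a function C -> C (value 0 at poles) *)
Definition reval (r : RF) (z : C) : C := (lrep r).1.[z] / (lrep r).2.[z].

Definition approx (a b : nat -> C) (n : nat) : RF :=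
  cfr (fun k => (a k)%:P%:F) (fun k => (b k)%:P%:F) 1 n 0 ('X)%:F.
End RatFun.

Section Statements.
Variable C : numFieldType.
Local Notation RF := {fraction {poly C}}.
Implicit Types (X : C -> Prop) (f : C -> C) (a b : nat -> C).

Definition w a b n : C -> C := reval (approx a b n).

Definition acf_expansion X f a b : Prop :=
  asym_seq1 X (fun n z => w a b n z - w a b n.-1 z) /\
  forall n, bigO X (fun z => f z - w a b n z) (fun z => w a b n.+1 z - w a b n z).

Definition pade_cond X f n (g h : {poly C}) : Prop :=
  [/\ h != 0, (size g <= n)%N, (size h <= n.+1)%N &
      bigO X (fun z => f z - g.[z] / h.[z]) (fun z => (z ^+ (2 * n).+1)^-1)].

Definition is_pade X f n (r : RF) : Prop :=
  (exists g h, pade_cond X f n g h /\ r = g%:F / h%:F) /\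
  (forall g h, pade_cond X f n g h -> g%:F / h%:F = r).

Definition best_approx X f (r : RF) : Prop :=
  forall v : RF, (rdeg v <= rdeg r)%N ->
    bigO X (fun z => f z - reval v z) (fun z => f z - reval r z) -> v = r.
End Statements.

(* The approximants satisfy the tail recursion
     w_{n+1}(a, b) = a_1 / (z + b_1 - w_n(a', b'))
   with a', b' the shifted sequences, and all asymptotic statements reduce, by
   induction along this recursion, to one estimate: if g, h = O(1/z) and
   g - h ~ k/z^m, then a_1/(z + b_1 - g) - a_1/(z + b_1 - h) ~ a_1 k/z^(m+2).
   It gives w_{n+1} - w_n ~ a_1...a_{n+1}/z^(2n+1), and it transports the
   tails f_n of (b) to the errors f - w_n of (c) and back.  Algebraically, w_n
   is N_n/D_n in lowest terms with deg D_n = n and deg N_n < n.  Two distinct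
   rational functions with denominators of degree at most n differ by at least
   a constant times z^(-2n) near infinity, so an error O(z^(-(2n+1))) singles
   out w_n among the functions of degree at most n; this gives (f), (g) and (3). *)
From HB Require Import structures.
From mathcomp Require Import all_boot all_order all_algebra.
From mathcomp Require Import fraction generic_quotient reals complex ring zify.
From Stdlib Require Import ClassicalEpsilon.
Set Implicit Arguments. Unset Strict Implicit. Unset Printing Implicit Defensive.
Import Order.TTheory GRing.Theory Num.Theory.
Local Open Scope ring_scope.

Section Landau.
Variable C : numFieldType.
Implicit Types (X P Q : C -> Prop) (f g h : C -> C) (c : C).

Definition near_infty X P := exists N : nat, forall z, X z -> N%:R < `|z| -> P z.

Lemma natr_maxn_lt (N1 N2 : nat) (x : C) :
  (maxn N1 N2)%:R < x -> N1%:R < x /\ N2%:R < x.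
Proof.
move=> h; split; apply: le_lt_trans h; rewrite ler_nat; [exact: leq_maxl | exact: leq_maxr].
Qed.

Lemma near_inftyI X P Q :
  near_infty X P -> near_infty X Q -> near_infty X (fun z => P z /\ Q z).
Proof.
move=> [N1 h1] [N2 h2]; exists (maxn N1 N2) => z Xz /natr_maxn_lt[z1 z2].
by split; [exact: h1 | exact: h2].
Qed.

Lemma near_inftyW X P Q :
  (forall z, X z -> P z -> Q z) -> near_infty X P -> near_infty X Q.
Proof. by move=> PQ [N h]; exists N => z Xz hz; apply: PQ => //; apply: h. Qed.

Lemma near_infty_restrict X P : near_infty (fun _ => True) P -> near_infty X P.
Proof. by move=> [N h]; exists N => z _; apply: h. Qed.

Lemma near_infty_neq0 X : near_infty X (fun z => z != 0).
Proof. by exists 0%N => z _; rewrite normr_gt0. Qed.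

Lemma near_infty_norm_ge1 X : near_infty X (fun z => 1 <= `|z|).
Proof. by exists 1%N => z _ /ltW. Qed.

Lemma bigO_trans X f g h : bigO X f g -> bigO X g h -> bigO X f h.
Proof.
move=> [M1 [M1_gt0 h1]] [M2 [M2_gt0 h2]]; exists (M1 * M2); split; first exact: mulr_gt0.
apply: near_inftyW (near_inftyI h1 h2) => z _ [e1 e2]; rewrite -mulrA.
by apply: le_trans e1 _; rewrite ler_wpM2l // ltW.
Qed.

Lemma bigO_eq X f g : near_infty X (fun z => f z = g z) -> bigO X f g.
Proof.
by move=> h; exists 1; split; [exact: ltr01 | apply: near_inftyW h => z _ ->; rewrite mul1r].
Qed.

Lemma bigO_refl X f : bigO X f f.
Proof. by apply: bigO_eq; exists 0%N. Qed.

Lemma bigO_restrict X f g : bigO (fun _ => True) f g -> bigO X f g.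
Proof. by move=> [M [M_gt0 h]]; exists M; split => //; apply: near_infty_restrict. Qed.

Lemma bigOD X f g h : bigO X f h -> bigO X g h -> bigO X (fun z => f z + g z) h.
Proof.
move=> [M1 [M1_gt0 h1]] [M2 [M2_gt0 h2]]; exists (M1 + M2); split; first exact: addr_gt0.
apply: near_inftyW (near_inftyI h1 h2) => z _ [e1 e2].
by apply: le_trans (ler_normD _ _) _; rewrite mulrDl lerD.
Qed.

Lemma bigON X f h : bigO X f h -> bigO X (fun z => - f z) h.
Proof.
by move=> [M [M_gt0 h1]]; exists M; split => //; apply: near_inftyW h1 => z _; rewrite normrN.
Qed.

Lemma bigOB X f g h : bigO X f h -> bigO X g h -> bigO X (fun z => f z - g z) h.
Proof. by move=> hf hg; apply: bigOD => //; apply: bigON. Qed.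

Lemma littleo_restrict X f g : littleo (fun _ => True) f g -> littleo X f g.
Proof. by move=> h M M_gt0; apply: near_infty_restrict; apply: h. Qed.

Lemma littleo_eq_norml X f f' g :
  (forall z, `|f' z| = `|f z|) -> littleo X f g -> littleo X f' g.
Proof. by move=> e h M M_gt0; apply: near_inftyW (h M M_gt0) => z _; rewrite e. Qed.

Lemma littleo_eq_normr X f g g' :
  (forall z, `|g' z| = `|g z|) -> littleo X f g -> littleo X f g'.
Proof. by move=> e h M M_gt0; apply: near_inftyW (h M M_gt0) => z _; rewrite e. Qed.

Lemma littleo_bigO X f g h : littleo X f g -> bigO X g h -> littleo X f h.
Proof.
move=> h1 [M [M_gt0 h2]] e e_gt0.
apply: near_inftyW (near_inftyI (h1 (e / M) (divr_gt0 e_gt0 M_gt0)) h2) => z _ [e1 e2].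
apply: le_trans e1 _; apply: le_trans (ler_wpM2l _ e2) _; first by rewrite ltW // divr_gt0.
by rewrite mulrA divfK // lt0r_neq0.
Qed.

Lemma bigO_littleo X f g h : bigO X f g -> littleo X g h -> littleo X f h.
Proof.
move=> [M [M_gt0 h1]] h2 e e_gt0.
apply: near_inftyW (near_inftyI h1 (h2 (e / M) (divr_gt0 e_gt0 M_gt0))) => z _ [e1 e2].
apply: le_trans e1 _; apply: le_trans (ler_wpM2l (ltW M_gt0) e2) _.
by rewrite mulrA mulrCA divff ?mulr1 // lt0r_neq0.
Qed.

Lemma littleoD X f g h : littleo X f h -> littleo X g h -> littleo X (fun z => f z + g z) h.
Proof.
move=> h1 h2 e e_gt0; have e2_gt0 : 0 < e / 2 by rewrite divr_gt0 ?ltr0n.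
apply: near_inftyW (near_inftyI (h1 _ e2_gt0) (h2 _ e2_gt0)) => z _ [e1 e2].
by apply: le_trans (ler_normD _ _) _; rewrite [e in e * _]splitr mulrDl lerD.
Qed.

Lemma littleoB X f g h : littleo X f h -> littleo X g h -> littleo X (fun z => f z - g z) h.
Proof.
by move=> h1 h2; apply: littleoD => //; apply: littleo_eq_norml h2 => z; rewrite normrN.
Qed.

Lemma littleoM X f1 g1 f2 g2 : littleo X f1 g1 -> bigO X f2 g2 ->
  littleo X (fun z => f1 z * f2 z) (fun z => g1 z * g2 z).
Proof.
move=> h1 [M [M_gt0 h2]] e e_gt0.
apply: near_inftyW (near_inftyI (h1 (e / M) (divr_gt0 e_gt0 M_gt0)) h2) => z _ [e1 e2].
rewrite !normrM; apply: le_trans (ler_pM (normr_ge0 _) (normr_ge0 _) e1 e2) _.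
by rewrite mulrACA divfK ?lt0r_neq0.
Qed.

Lemma norm_le_double (x y : C) : `|x - y| <= 2^-1 * `|y| -> `|y| <= 2 * `|x|.
Proof.
move=> h; have y_eq : y = x - (x - y) by ring.
have y_le : `|y| <= `|x| + 2^-1 * `|y|.
  by rewrite {1}y_eq; apply: le_trans (ler_normB _ _) _; rewrite lerD2l.
rewrite -ler_pdivrMl ?ltr0n // mulrC -(lerD2r (`|y| / 2)) -splitr.
by rewrite mulrC.
Qed.

Lemma littleoB_bigO X f g : littleo X (fun z => f z - g z) g -> bigO X g f.
Proof.
move=> h; exists 2; split; first by rewrite ltr0n.
apply: near_inftyW (h 2^-1 _) => [z _|]; first exact: norm_le_double.
by rewrite invr_gt0 ltr0n.
Qed.

Lemma asym_of_littleo X f g : littleo X (fun z => f z - g z) g -> asym X f g.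
Proof.
move=> h; split => //; apply: littleo_bigO (littleoB_bigO h).
by apply: littleo_eq_norml h => z; rewrite distrC.
Qed.

Lemma asym_bigO X f g : asym X f g -> bigO X f g.
Proof. by case=> _; apply: littleoB_bigO. Qed.

Lemma asym_sym X f g : asym X f g -> asym X g f.
Proof. by case. Qed.

Lemma asym_eq X f g : near_infty X (fun z => f z = g z) -> asym X f g.
Proof.
move=> h; apply: asym_of_littleo => M M_gt0; apply: near_inftyW h => z _ ->.
by rewrite subrr normr0 mulr_ge0 // ltW.
Qed.

Lemma asym_refl X f : asym X f f.
Proof. by apply: asym_eq; exists 0%N. Qed.

Lemma asym_trans X f g h : asym X f g -> asym X g h -> asym X f h.
Proof.
move=> [fg _] gh; apply: asym_of_littleo.
apply: littleo_eq_norml (littleoD (littleo_bigO fg (asym_bigO gh)) gh.1) => z.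
by congr `|_|; ring.
Qed.

Lemma asym_congr X f f' g g' : asym X f g -> near_infty X (fun z => f z = f' z) ->
  near_infty X (fun z => g z = g' z) -> asym X f' g'.
Proof.
move=> h ef eg.
exact: asym_trans (asym_trans (asym_sym (asym_eq ef)) h) (asym_eq eg).
Qed.

Lemma asym_restrict X f g : asym (fun _ => True) f g -> asym X f g.
Proof. by case=> h1 h2; split; apply: littleo_restrict. Qed.

Lemma asymM X f1 g1 f2 g2 : asym X f1 g1 -> asym X f2 g2 ->
  asym X (fun z => f1 z * f2 z) (fun z => g1 z * g2 z).
Proof.
move=> h1 h2; apply: asym_of_littleo.
have o1 := littleoM h1.1 (asym_bigO h2).
have o2 : littleo X (fun z => g1 z * (f2 z - g2 z)) (fun z => g1 z * g2 z).
  apply: littleo_eq_normr (littleo_eq_norml _ (littleoM h2.1 (bigO_refl X g1))) => z.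
    by rewrite mulrC.
  by rewrite mulrC.
by apply: littleo_eq_norml (littleoD o1 o2) => z; congr `|_|; ring.
Qed.

Lemma asymMl X f g c : asym X f g -> asym X (fun z => c * f z) (fun z => c * g z).
Proof. exact: asymM (asym_refl X (fun _ => c)). Qed.

Lemma asymD_littleo X f g h : asym X f g -> littleo X h g -> asym X (fun z => f z + h z) g.
Proof.
move=> h1 h2; apply: asym_of_littleo.
by apply: littleo_eq_norml (littleoD h1.1 h2) => z; congr `|_|; ring.
Qed.

Lemma asym_neq0 X f g :
  asym X f g -> near_infty X (fun z => g z != 0) -> near_infty X (fun z => f z != 0).
Proof.
move=> [_ h] g_neq0.
apply: near_inftyW (near_inftyI g_neq0 (h 2^-1 _)) => [z _ [gz hz]|]; last first.
  by rewrite invr_gt0 ltr0n.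
apply: contraNneq gz => fz; move: hz.
by rewrite fz subr0 normr0 mulr0 normr_le0.
Qed.

Lemma normr_invB_le (x y e : C) : 0 < e -> `|x - y| <= 2^-1 * `|y| ->
  `|x - y| <= e / 2 * `|y| -> `|x^-1 - y^-1| <= e * `|y^-1|.
Proof.
move=> e_gt0; have [->|y_neq0] := eqVneq y 0 => h1 h2.
  move: h1; rewrite subr0 normr0 mulr0 normr_le0 => /eqP ->.
  by rewrite invr0 subr0 normr0 mulr0.
have y_le := norm_le_double h1.
have x_neq0 : x != 0.
  by apply: contraTneq y_le => ->; rewrite normr0 mulr0 normr_le0.
have -> : x^-1 - y^-1 = (y - x) * x^-1 * y^-1 by field; rewrite y_neq0 x_neq0.
rewrite !normrM !normfV distrC.
have nx : 0 < `|x| by rewrite normr_gt0.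
have ny : 0 < `|y| by rewrite normr_gt0.
have invx_le : `|x|^-1 <= 2 * `|y|^-1.
  by rewrite -(ler_pM2r nx) mulVf ?lt0r_neq0 // mulrAC ler_pdivlMr // mul1r.
have ix : 0 <= `|x|^-1 by rewrite invr_ge0 ltW.
have iy : 0 <= `|y|^-1 by rewrite invr_ge0 ltW.
apply: le_trans (ler_wpM2r iy (ler_wpM2r ix h2)) _.
have -> : e / 2 * `|y| * `|x|^-1 * `|y|^-1 = e / 2 * `|x|^-1.
  by field; rewrite !lt0r_neq0.
apply: le_trans (ler_wpM2l _ invx_le) _; first by rewrite ltW // divr_gt0 ?ltr0n.
by rewrite mulrA divfK ?pnatr_eq0.
Qed.

Lemma asymV X f g : asym X f g -> asym X (fun z => (f z)^-1) (fun z => (g z)^-1).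
Proof.
move=> [h _]; apply: asym_of_littleo => e e_gt0.
have e2_gt0 : 0 < e / 2 by rewrite divr_gt0 ?ltr0n.
apply: near_inftyW (near_inftyI (h _ e2_gt0) (h 2^-1 _)) => [z _ [h1 h2]|].
  exact: normr_invB_le.
by rewrite invr_gt0 ltr0n.
Qed.

Lemma bigO_invX X k j : (k <= j)%N -> bigO X (fun z => (z ^+ j)^-1) (fun z => (z ^+ k)^-1).
Proof.
move=> le_kj; exists 1; split; first exact: ltr01.
apply: near_inftyW (near_infty_norm_ge1 X) => z _ z_ge1.
have nz : 0 < `|z| by exact: lt_le_trans ltr01 z_ge1.
by rewrite mul1r !normfV !normrX lef_pV2 ?posrE ?exprn_gt0 // ler_weXn2l.
Qed.

Lemma bigO_cdiv_invX X c k : bigO X (fun z => c / z ^+ k) (fun z => (z ^+ k)^-1).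
Proof.
exists (`|c| + 1); split; first exact: ltr_wpDl (normr_ge0 c) ltr01.
by exists 0%N => z _ _; rewrite normrM ler_wpM2r // lerDl ler01.
Qed.

Lemma bigO_invX_cdiv X c k : c != 0 -> bigO X (fun z => (z ^+ k)^-1) (fun z => c / z ^+ k).
Proof.
move=> c_neq0; exists `|c|^-1; split; first by rewrite invr_gt0 normr_gt0.
by exists 0%N => z _ _; rewrite normrM mulrA mulVf ?mul1r // normr_eq0.
Qed.

End Landau.

Lemma tofrac_ratio (R : idomainType) (x : {fraction R}) :
  exists n d, d != 0 /\ x = n%:F / d%:F.
Proof.
elim/quotW: x => r; exists (\n_r), (\d_r); split; first exact: denom_ratioP.
have d_neq0 : (\d_r)%:F != 0 by rewrite tofrac_eq0 denom_ratioP.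
apply: (mulIf d_neq0); rewrite divfK // /FracField.tofrac -lock -[_ * _]FracField.pi_mul.
apply/eqmodP; rewrite /= FracField.equivfE /FracField.mulf.
by rewrite !numden_Ratio ?mul1r ?mulr1 ?denom_ratioP ?oner_neq0 ?mulf_neq0 // mulrC.
Qed.

Section LowestTerms.
Variable F : fieldType.
Local Notation RF := {fraction {poly F}}.

Lemma eq_tofrac_div (p q p' q' : {poly F}) : q != 0 -> q' != 0 ->
  (p%:F / q%:F = p'%:F / q'%:F :> RF) <-> p * q' = p' * q.
Proof.
move=> q_neq0 q'_neq0; split.
  by move/eqP; rewrite eqr_div ?tofrac_eq0 // -!tofracM tofrac_eq => /eqP.
by move=> e; apply/eqP; rewrite eqr_div ?tofrac_eq0 // -!tofracM e.
Qed.

Lemma lrepP (r : RF) : lowest_rep r (lrep r).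
Proof.
apply: epsilon_spec; have [n [d [d_neq0 ->]]] := tofrac_ratio r.
set g := gcdp n d.
have g_neq0 : g != 0 by rewrite gcdp_eq0 negb_and d_neq0 orbT.
have n_eq : n %/ g * g = n by rewrite divpK // dvdp_gcdl.
have d_eq : d %/ g * g = d by rewrite divpK // dvdp_gcdr.
have dg_neq0 : d %/ g != 0 by apply: contraNneq d_neq0 => e; rewrite -d_eq e mul0r.
exists (n %/ g, d %/ g); split => //=; split.
  by apply: coprimep_div_gcd; rewrite d_neq0 orbT.
by apply/eq_tofrac_div => //; rewrite -[d in RHS]d_eq -[n in LHS]n_eq mulrAC mulrA.
Qed.

Lemma lowest_rep_size (r : RF) p q p' q' : lowest_rep r (p, q) -> lowest_rep r (p', q') ->
  size p = size p' /\ size q = size q'.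
Proof.
move=> [/= q_neq0 [cop e1]] [/= q'_neq0 [cop' e2]].
have e : p * q' = p' * q by apply/eq_tofrac_div => //; rewrite -e1 -e2.
have q_eqp : q %= q'.
  rewrite coprimep_sym in cop; rewrite coprimep_sym in cop'.
  apply/andP; split; [rewrite -(Gauss_dvdpr _ cop) e | rewrite -(Gauss_dvdpr _ cop') -e].
    exact: dvdp_mulIr.
  exact: dvdp_mulIr.
have sq := eqp_size q_eqp; split => //.
have [p0|p_neq0] := eqVneq p 0.
  move: e; rewrite p0 mul0r => /esym/eqP; rewrite mulf_eq0 (negbTE q_neq0) orbF.
  by move=> /eqP ->.
have p'_neq0 : p' != 0 by apply: contraNneq (mulf_neq0 p_neq0 q'_neq0) => p0; rewrite e p0 mul0r.
have := congr1 (fun s : {poly F} => size s) e; rewrite /= !size_mul // sq.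
have q'_gt0 : (0 < size q')%N by rewrite size_poly_gt0.
by move=> /(congr1 S); rewrite !prednK ?addn_gt0 ?q'_gt0 ?orbT //; apply: addIn.
Qed.

Lemma size_lrep_rdeg (r : RF) :
  (size (lrep r).1 <= (rdeg r).+1)%N /\ (size (lrep r).2 <= (rdeg r).+1)%N.
Proof.
by rewrite /rdeg; split; apply: leq_trans (leqSpred _); [exact: leq_maxl | exact: leq_maxr].
Qed.

End LowestTerms.

Definition shift1 (T : Type) (s : nat -> T) i := s i.+1.

Lemma cfr_shift (F : fieldType) (a b : nat -> F) k n t x :
  cfr a b k.+1 n t x = cfr (shift1 a) (shift1 b) k n t x.
Proof. by elim: n k => //= n IH k; rewrite IH. Qed.

Lemma cfr1S (F : fieldType) (a b : nat -> F) n t x :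
  cfr a b 1 n.+1 t x = a 1%N / (x + b 1%N - cfr (shift1 a) (shift1 b) 1 n t x).
Proof. by rewrite /= cfr_shift. Qed.

Lemma div_sub_div (F : fieldType) (A x n d : F) : d != 0 -> A / (x - n / d) = A * d / (x * d - n).
Proof. by move=> d_neq0; rewrite -{1}(mulfK d_neq0 x) -mulrBl invf_div mulrA. Qed.

Section ContinuedFraction.
Variable F : fieldType.
Local Notation RF := {fraction {poly F}}.
Implicit Types a b : nat -> F.

Lemma approxS a b n : approx a b n.+1 =
  (a 1%N)%:P%:F / ('X%:F + (b 1%N)%:P%:F - approx (shift1 a) (shift1 b) n) :> RF.
Proof. by rewrite /approx cfr1S. Qed.

Definition aprod a n := \prod_(1 <= i < n.+1) a i.

Lemma aprodS a n : aprod a n.+1 = a 1%N * aprod (shift1 a) n.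
Proof. by rewrite /aprod big_nat_recl. Qed.

Lemma aprod1 a : aprod a 1 = a 1%N.
Proof. by rewrite /aprod big_nat1. Qed.

Lemma aprod_neq0 a n : (forall k, (0 < k)%N -> a k != 0) -> aprod a n != 0.
Proof.
move=> a_neq0; rewrite /aprod prodf_seq_neq0; apply/allP => i.
by rewrite mem_index_iota => /andP[i_gt0 _]; exact: a_neq0.
Qed.

End ContinuedFraction.

Section Archimedean.
Variable C : numFieldType.
Hypothesis archi : forall x : C, exists n : nat, `|x| < n%:R.
Local Notation RF := {fraction {poly C}}.
Implicit Types (X : C -> Prop) (f g h : C -> C) (a b : nat -> C) (c : C).

Lemma near_infty_norm_gt X c : near_infty X (fun z => `|c| < `|z|).
Proof. by have [n hn] := archi c; exists n => z _; exact: lt_trans. Qed.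

Lemma littleo_cst_id X c : littleo X (fun _ => c) (fun z => z).
Proof.
move=> e e_gt0; apply: near_inftyW (near_infty_norm_gt X (c / e)) => z _.
by rewrite normrM normfV (gtr0_norm e_gt0) ltr_pdivrMr // mulrC => /ltW.
Qed.

Lemma littleo_inv_cst1 X : littleo X (fun z => z^-1) (fun _ => 1).
Proof.
move=> e e_gt0.
apply: near_inftyW (near_inftyI (near_infty_norm_gt X e^-1) (near_infty_neq0 X)).
move=> z _ [hz z_neq0]; have nz : 0 < `|z| by rewrite normr_gt0.
rewrite normfV (gtr0_norm e_gt0) -[e^-1]mulr1 ltr_pdivrMl // in hz.
by rewrite normfV normr1 mulr1 -[`|z|^-1]mul1r ler_pdivrMr // ltW.
Qed.

Lemma littleo_invX X k j : (k < j)%N -> littleo X (fun z => (z ^+ j)^-1) (fun z => (z ^+ k)^-1).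
Proof.
case: j => // j lt_kj.
have o := littleoM (littleo_inv_cst1 X) (bigO_invX X (lt_kj : (k <= j)%N)).
apply: littleo_eq_normr (littleo_eq_norml _ o) => z /=; last by rewrite exprS invfM.
by rewrite mul1r.
Qed.

Lemma asym_bigO_inv X g c k : (0 < k)%N ->
  asym X g (fun z => c / z ^+ k) -> bigO X g (fun z => z^-1).
Proof.
move=> k_gt0 h; apply: bigO_trans (asym_bigO h) (bigO_trans (bigO_cdiv_invX _ c k) _).
exact: (bigO_invX X k_gt0).
Qed.

Lemma asym_affine X c g : bigO X g (fun z => z^-1) -> asym X (fun z => z + c - g z) (fun z => z).
Proof.
move=> g_small; apply: asym_of_littleo.
have g_o : littleo X g (fun z => z).
  apply: bigO_littleo g_small (bigO_littleo _ (littleo_cst_id X 1)).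
  exists 1; split; first exact: ltr01.
  apply: near_inftyW (near_infty_norm_ge1 X) => z _ z_ge1.
  rewrite normfV normr1 mul1r invf_le1 //; exact: lt_le_trans ltr01 z_ge1.
by apply: littleo_eq_norml (littleoB (littleo_cst_id X c) g_o) => z; congr `|_|; ring.
Qed.

(* Both denominators are ~ z, and the difference of the two fractions is
   a1 (g - h) / ((z + b1 - g)(z + b1 - h)). *)
Lemma asym_cf_step X (a1 b1 c : C) (k : nat) g h :
  bigO X g (fun z => z^-1) -> bigO X h (fun z => z^-1) ->
  asym X (fun z => g z - h z) (fun z => c / z ^+ k) ->
  asym X (fun z => a1 / (z + b1 - g z) - a1 / (z + b1 - h z)) (fun z => a1 * c / z ^+ k.+2).
Proof.
move=> g_small h_small gh.
have u := asym_affine b1 g_small; have v := asym_affine b1 h_small.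
have u_neq0 := asym_neq0 u (near_infty_neq0 X).
have v_neq0 := asym_neq0 v (near_infty_neq0 X).
apply: asym_congr (asymMl a1 (asymM gh (asymM (asymV u) (asymV v)))) _ _.
  apply: near_inftyW (near_inftyI u_neq0 v_neq0) => z _ [u0 v0] /=.
  by field; rewrite u0 v0.
by exists 0%N => z _ _ /=; rewrite !exprS !invfM; ring.
Qed.

Lemma horner_asym_lead (p : {poly C}) : p != 0 ->
  asym (fun _ => True) (fun z => p.[z]) (fun z => lead_coef p * z ^+ (size p).-1).
Proof.
elim/poly_ind: p => [|p c IH]; first by rewrite eqxx.
have [-> |p_neq0 _] := eqVneq p 0.
  rewrite mul0r add0r polyC_eq0 => /negbTE c_neq0.
  apply: asym_eq; exists 0%N => z _ _.
  by rewrite hornerC lead_coefC size_polyC c_neq0 expr0 mulr1.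
have sp : size (p * 'X + c%:P) = (size p).+1 by rewrite size_MXaddC (negbTE p_neq0).
have lp : lead_coef (p * 'X + c%:P) = lead_coef p.
  rewrite lead_coefDl ?lead_coefMX // size_mulX //.
  by apply: leq_ltn_trans (size_polyC_leq1 c) _; rewrite ltnS size_poly_gt0.
have lp_neq0 : lead_coef p != 0 by rewrite lead_coef_eq0.
rewrite sp lp /=.
set e := (size p).-1 in IH *.
have -> : size p = e.+1 by rewrite /e prednK // size_poly_gt0.
have c_o : littleo (fun _ => True) (fun _ => c) (fun z => lead_coef p * z ^+ e * z).
  apply: littleo_bigO (littleo_cst_id _ c) _; exists `|lead_coef p|^-1.
  split; first by rewrite invr_gt0 normr_gt0.
  apply: near_inftyW (near_infty_norm_ge1 _) => z _ z_ge1.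
  rewrite !normrM normrX !mulrA mulVf ?normr_eq0 // mul1r.
  by rewrite ler_peMl // exprn_ege1.
apply: asym_congr (asymD_littleo (asymM (IH p_neq0) (asym_refl _ id)) c_o) _ _.
  by exists 0%N => z _ _; rewrite hornerMXaddC.
by exists 0%N => z _ _; rewrite exprSr mulrA.
Qed.

Lemma near_infty_horner_neq0 X (p : {poly C}) : p != 0 -> near_infty X (fun z => p.[z] != 0).
Proof.
move=> p_neq0; apply: near_infty_restrict; apply: asym_neq0 (horner_asym_lead p_neq0) _.
apply: near_inftyW (near_infty_neq0 _) => z _ z_neq0.
by rewrite mulf_neq0 ?lead_coef_eq0 // expf_neq0.
Qed.

Lemma not_bigO_invX_invXS X k :
  unbounded X -> ~ bigO X (fun z => (z ^+ k)^-1) (fun z => (z ^+ k.+1)^-1).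
Proof.
move=> X_unb [M [M_gt0 [N h]]]; have [m M_lt] := archi M.
have [z [Xz /natr_maxn_lt[N_lt m_lt]]] := X_unb (maxn N m).
have z_gt0 : 0 < `|z| by exact: le_lt_trans (ler0n _ _) N_lt.
move: (h z Xz N_lt); rewrite !normfV !normrX exprSr invfM mulrCA.
rewrite ler_pMr ?invr_gt0 ?exprn_gt0 // ler_pdivlMr // mul1r -(gtr0_norm M_gt0).
by move=> /le_lt_trans/(_ (lt_trans M_lt m_lt)); rewrite ltxx.
Qed.

(* p1/q1 - p2/q2 = (p1 q2 - p2 q1)/(q1 q2), with a nonzero numerator and a
   denominator of degree at most 2n. *)
Lemma bigO_invX_ratfunB n (p1 q1 p2 q2 : {poly C}) : q1 != 0 -> q2 != 0 ->
  (size q1 <= n.+1)%N -> (size q2 <= n.+1)%N -> p1 * q2 != p2 * q1 ->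
  bigO (fun _ => True) (fun z => (z ^+ (2 * n))^-1) (fun z => p1.[z] / q1.[z] - p2.[z] / q2.[z]).
Proof.
move=> q1_neq0 q2_neq0 s1 s2 p_neq.
set P := p1 * q2 - p2 * q1; have P_neq0 : P != 0 by rewrite subr_eq0.
set Q := q1 * q2; have Q_neq0 : Q != 0 by rewrite mulf_neq0.
have sQ : ((size Q).-1 <= 2 * n)%N.
  rewrite /Q size_mul // -!subn1 -subnDA leq_subLR; apply: leq_trans (leq_add s1 s2) _; lia.
have PQ := asymM (horner_asym_lead P_neq0) (asymV (horner_asym_lead Q_neq0)).
set dP := (size P).-1 in PQ; set dQ := (size Q).-1 in PQ sQ.
have lP : lead_coef P != 0 by rewrite lead_coef_eq0.
have lQ : lead_coef Q != 0 by rewrite lead_coef_eq0.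
apply: bigO_trans _ (bigO_trans (asym_bigO (asym_sym PQ)) _); last first.
  apply: bigO_eq; apply: near_inftyW (near_inftyI (near_infty_horner_neq0 _ q1_neq0)
    (near_infty_horner_neq0 _ q2_neq0)) => z _ [z1 z2].
  by rewrite /P /Q !hornerE; field; rewrite z1 z2.
exists (`|lead_coef Q| / `|lead_coef P|); split; first by rewrite divr_gt0 // normr_gt0.
apply: near_inftyW (near_infty_norm_ge1 _) => z _ z_ge1.
have z_gt0 : 0 < `|z| by exact: lt_le_trans ltr01 z_ge1.
have zQ_gt0 : 0 < `|z| ^+ dQ by rewrite exprn_gt0.
rewrite normfV normrX normrM normfV !normrM !normrX.
have -> : `|lead_coef Q| / `|lead_coef P| * (`|lead_coef P| * `|z| ^+ dP *
    (`|lead_coef Q| * `|z| ^+ dQ)^-1) = `|z| ^+ dP / `|z| ^+ dQ.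
  by field; rewrite !normr_eq0 lP lQ (lt0r_neq0 zQ_gt0).
rewrite ler_pdivlMr // mulrC ler_pdivrMr ?exprn_gt0 //.
apply: le_trans (ler_weXn2l z_ge1 sQ) _.
by rewrite ler_peMl ?exprn_ege1 // exprn_ge0 // ltW.
Qed.

Lemma ratfunB_bigO_eq X n (p1 q1 p2 q2 : {poly C}) : unbounded X -> q1 != 0 -> q2 != 0 ->
  (size q1 <= n.+1)%N -> (size q2 <= n.+1)%N ->
  bigO X (fun z => p1.[z] / q1.[z] - p2.[z] / q2.[z]) (fun z => (z ^+ (2 * n).+1)^-1) ->
  p1 * q2 = p2 * q1.
Proof.
move=> X_unb q1_neq0 q2_neq0 s1 s2 hO; apply/eqP/negP => /negP p_neq.
apply: (not_bigO_invX_invXS (k := (2 * n)%N) X_unb).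
exact: bigO_trans (bigO_restrict _ (bigO_invX_ratfunB q1_neq0 q2_neq0 s1 s2 p_neq)) hO.
Qed.

Lemma reval_near X (r : RF) (p q : {poly C}) : q != 0 -> r = p%:F / q%:F ->
  near_infty X (fun z => reval r z = p.[z] / q.[z]).
Proof.
move=> q_neq0 er; have [q'_neq0 [_ e1]] := lrepP r.
have e : (lrep r).1 * q = p * (lrep r).2 by apply/eq_tofrac_div => //; rewrite -e1 -er.
apply: near_inftyW (near_inftyI (near_infty_horner_neq0 X q'_neq0)
  (near_infty_horner_neq0 X q_neq0)) => z _ [qz q'z].
by rewrite /reval; apply/eqP; rewrite eqr_div // -!hornerM e.
Qed.

Definition approxf a b n (z : C) := cfr a b 1 n 0 z.

Lemma approxfS a b n z :
  approxf a b n.+1 z = a 1%N / (z + b 1%N - approxf (shift1 a) (shift1 b) n z).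
Proof. exact: cfr1S. Qed.

Lemma approxf_bigO_inv n a b : bigO (fun _ => True) (approxf a b n) (fun z => z^-1).
Proof.
elim: n a b => [|n IH] a b.
  by exists 1; split; [exact: ltr01 | exists 0%N => z _ _; rewrite normr0 mul1r normr_ge0].
have h := asymMl (a 1%N) (asymV (asym_affine (b 1%N) (IH (shift1 a) (shift1 b)))).
apply: bigO_trans (bigO_trans _ (asym_bigO h)) (bigO_cdiv_invX _ (a 1%N) 1).
by apply: bigO_eq; exists 0%N => z _ _; rewrite approxfS.
Qed.

Lemma approxf_asym n a b : asym (fun _ => True) (approxf a b n.+1) (fun z => a 1%N / z).
Proof.
have h := asymMl (a 1%N) (asymV (asym_affine (b 1%N) (approxf_bigO_inv n (shift1 a) (shift1 b)))).
by apply: asym_congr h _ _; exists 0%N => z _ _ //; rewrite approxfS.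
Qed.

Lemma approxf_diff_asym n a b :
  asym (fun _ => True) (fun z => approxf a b n.+1 z - approxf a b n z)
       (fun z => aprod a n.+1 / z ^+ (2 * n).+1).
Proof.
elim: n a b => [|n IH] a b.
  apply: asym_congr (approxf_asym 0 a b) _ _; exists 0%N => z _ _ /=.
    by rewrite /approxf /= !subr0.
  by rewrite aprod1 expr1.
have h := asym_cf_step (a 1%N) (b 1%N) (approxf_bigO_inv n.+1 (shift1 a) (shift1 b))
  (approxf_bigO_inv n (shift1 a) (shift1 b)) (IH (shift1 a) (shift1 b)).
apply: asym_congr h _ _; exists 0%N => z _ _ /=; first by rewrite !approxfS.
by rewrite [aprod a _]aprodS; congr (_ / _ ^+ _); lia.
Qed.

Lemma tail_error_asym n a b X f t : (forall z, X z -> f z = cfr a b 1 n (t z) z) ->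
  asym X t (fun z => a n.+1 / z) ->
  asym X (fun z => f z - approxf a b n z) (fun z => aprod a n.+1 / z ^+ (2 * n).+1).
Proof.
elim: n a b f => [|n IH] a b f f_eq t_asym.
  apply: asym_congr t_asym _ _; exists 0%N => z Xz _ /=; first by rewrite f_eq // subr0.
  by rewrite aprod1 expr1.
pose g z := cfr (shift1 a) (shift1 b) 1 n (t z) z.
have g_err := IH (shift1 a) (shift1 b) g (fun z _ => erefl) t_asym.
have g_small : bigO X g (fun z => z^-1).
  apply: bigO_trans (bigO_eq _) (bigOD (asym_bigO_inv _ g_err)
    (bigO_restrict _ (approxf_bigO_inv n (shift1 a) (shift1 b)))) => //.
  by exists 0%N => z _ _; rewrite subrK.
have h := asym_cf_step (a 1%N) (b 1%N) g_small
  (bigO_restrict X (approxf_bigO_inv n (shift1 a) (shift1 b))) g_err.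
apply: asym_congr h _ _; exists 0%N => z Xz _ /=; first by rewrite f_eq // approxfS cfr1S.
by rewrite [aprod a _]aprodS; congr (_ / _ ^+ _); lia.
Qed.

(* Peeling off the first level, f = a1/(z + b1 - g) with g := z + b1 - a1/f,
   and g satisfies the hypothesis for the shifted sequences. *)
Lemma error_asym_tail n a b X f : (forall k, (0 < k)%N -> a k != 0) ->
  (forall m, asym X (fun z => f z - approxf a b m z) (fun z => aprod a m.+1 / z ^+ (2 * m).+1)) ->
  exists t, (forall z, X z -> f z = cfr a b 1 n (t z) z) /\ asym X t (fun z => a n.+1 / z).
Proof.
elim: n a b f => [|n IH] a b f a_neq0 f_err.
  exists f; split => //; apply: asym_congr (f_err 0%N) _ _; exists 0%N => z _ _ /=.
    by rewrite /approxf /= subr0.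
  by rewrite aprod1 expr1.
have a1_neq0 : a 1%N != 0 by exact: a_neq0.
have f_asym : asym X f (fun z => a 1%N / z).
  apply: asym_congr (f_err 0%N) _ _; exists 0%N => z _ _ /=.
    by rewrite /approxf /= subr0.
  by rewrite aprod1 expr1.
have f_neq0 : near_infty X (fun z => f z != 0).
  apply: asym_neq0 f_asym _; apply: near_inftyW (near_infty_neq0 X) => z _ z_neq0.
  by rewrite mulf_neq0 // invr_eq0.
have u_asym : asym X (fun z => a 1%N * (f z)^-1) (fun z => z).
  apply: asym_congr (asymMl (a 1%N) (asymV f_asym)) _ _; first by exists 0%N.
  by apply: near_inftyW (near_infty_neq0 X) => z _ z_neq0; field; rewrite z_neq0 a1_neq0.
pose g z := z + b 1%N - a 1%N / f z.
have g_err m : asym X (fun z => g z - approxf (shift1 a) (shift1 b) m z)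
    (fun z => aprod (shift1 a) m.+1 / z ^+ (2 * m).+1).
  have v := asym_affine (b 1%N) (bigO_restrict X (approxf_bigO_inv m (shift1 a) (shift1 b))).
  have v_neq0 := asym_neq0 v (near_infty_neq0 X).
  apply: asym_congr (asymMl (a 1%N)^-1 (asymM (asymM (f_err m.+1) u_asym) v)) _ _.
    apply: near_inftyW (near_inftyI (near_inftyI f_neq0 v_neq0) (near_infty_neq0 X)).
    move=> z _ [[f0 v0] z0] /=; rewrite approxfS /g.
    by field; rewrite f0 v0 a1_neq0.
  apply: near_inftyW (near_infty_neq0 X) => z _ z_neq0 /=.
  have -> : (2 * m.+1).+1 = (2 * m).+3 by lia.
  by rewrite [aprod a _]aprodS !exprS; field; rewrite expf_neq0 // z_neq0 a1_neq0.
have [t [t_eq t_asym]] := IH (shift1 a) (shift1 b) g (fun k _ => a_neq0 k.+1 erefl) g_err.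
exists t; split => // z Xz; rewrite cfr1S -t_eq // /g.
have -> : z + b 1%N - (z + b 1%N - a 1%N / f z) = a 1%N / f z by ring.
by rewrite invfM invrK mulrA divff // mul1r.
Qed.

Lemma approx_rep n a b : (forall k, (0 < k)%N -> a k != 0) ->
  exists N D : {poly C}, [/\ lowest_rep (approx a b n) (N, D), size D = n.+1,
    (size N <= n)%N & near_infty (fun _ => True) (fun z => approxf a b n z = N.[z] / D.[z])].
Proof.
elim: n a b => [|n IH] a b a_neq0.
  exists 0, 1; split; last by exists 0%N => z _ _; rewrite horner0 mul0r.
  - by split; [exact: oner_neq0 | rewrite coprimep1 /approx /= tofrac0 mul0r].
  - exact: size_poly1.
  - by rewrite size_poly0.
have a1_neq0 : a 1%N != 0 by exact: a_neq0.
have [N [D [[/= D_neq0 [cop e]] sD sN N_eq]]] :=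
  IH (shift1 a) (shift1 b) (fun k _ => a_neq0 k.+1 erefl).
pose D' := ('X + (b 1%N)%:P) * D - N.
have sXD : size (('X + (b 1%N)%:P) * D) = n.+2.
  by rewrite size_mul ?size_XaddC ?sD // -size_poly_eq0 size_XaddC.
have sD' : size D' = n.+2 by rewrite /D' size_polyDl sXD // size_polyN; exact: leq_trans sN _.
have D'_neq0 : D' != 0 by rewrite -size_poly_eq0 sD'.
exists (a 1%N *: D), D'; split => //; last first.
- apply: near_inftyW (near_inftyI N_eq (near_inftyI (near_infty_horner_neq0 _ D_neq0)
    (near_infty_horner_neq0 _ D'_neq0))) => z _ [e1 [d1 d2]].
  by rewrite approxfS e1 div_sub_div // hornerZ /D' !hornerE.
- by rewrite size_scale // sD.
split => //=; split.
  rewrite coprimepZl // /D' coprimep_addl_mul -scaleN1r coprimepZr ?oppr_eq0 ?oner_eq0 //.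
  by rewrite coprimep_sym.
rewrite approxS e -mul_polyC /D' tofracM tofracB tofracM tofracD div_sub_div //.
by rewrite tofrac_eq0.
Qed.

Lemma size_lrep_approx n a b : (forall k, (0 < k)%N -> a k != 0) ->
  (size (lrep (approx a b n)).1 <= n)%N /\ size (lrep (approx a b n)).2 = n.+1.
Proof.
move=> a_neq0; have [N [D [rep sD sN _]]] := approx_rep n b a_neq0.
by have [-> ->] := lowest_rep_size (lrepP (approx a b n)) rep.
Qed.

Lemma rdeg_approx n a b : (forall k, (0 < k)%N -> a k != 0) -> rdeg (approx a b n) = n.
Proof.
move=> a_neq0; have [s1 s2] := size_lrep_approx n b a_neq0.
by rewrite /rdeg s2 (maxn_idPr (leq_trans s1 (leqnSn n))).
Qed.

Lemma w_near_approxf X n a b : (forall k, (0 < k)%N -> a k != 0) ->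
  near_infty X (fun z => w a b n z = approxf a b n z).
Proof.
move=> a_neq0; have [N [D [[D_neq0 [_ e]] _ _ N_eq]]] := approx_rep n b a_neq0.
apply: near_inftyW (near_inftyI (reval_near X D_neq0 e) (near_infty_restrict X N_eq)).
by move=> z _ [e1 e2]; rewrite /w e1 e2.
Qed.

Section Expansion.
Variables a b : nat -> C.
Hypothesis a_neq0 : forall n, (0 < n)%N -> a n != 0.

Definition wdiff n z := w a b n.+1 z - w a b n z.

Lemma wdiff_asym X n : asym X (wdiff n) (fun z => aprod a n.+1 / z ^+ (2 * n).+1).
Proof.
apply: asym_restrict; apply: asym_congr (approxf_diff_asym n a b) _ _; last by exists 0%N.
apply: near_inftyW (near_inftyI (w_near_approxf _ n.+1 b a_neq0) (w_near_approxf _ n b a_neq0)).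
by move=> z _ [e1 e2]; rewrite /wdiff e1 e2.
Qed.

Lemma wdiff_bigO X n : bigO X (wdiff n) (fun z => (z ^+ (2 * n).+1)^-1).
Proof. exact: bigO_trans (asym_bigO (wdiff_asym X n)) (bigO_cdiv_invX _ _ _). Qed.

Lemma bigO_wdiff X n : bigO X (fun z => (z ^+ (2 * n).+1)^-1) (wdiff n).
Proof.
apply: bigO_trans (bigO_invX_cdiv _ _ (aprod_neq0 _ a_neq0)) _.
exact: asym_bigO (asym_sym (wdiff_asym X n)).
Qed.

Lemma w_asym n : (0 < n)%N -> asym (fun _ => True) (w a b n) (fun z => a 1%N / z).
Proof.
case: n => // n _; apply: asym_congr (approxf_asym n a b) _ _; last by exists 0%N.
by apply: near_inftyW (w_near_approxf _ n.+1 b a_neq0) => z _ ->.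
Qed.

Lemma w_diff_asym n : (0 < n)%N ->
  asym (fun _ => True) (fun z => w a b n z - w a b n.-1 z)
       (fun z => (\prod_(1 <= i < n.+1) a i) / z ^+ (2 * n).-1).
Proof.
case: n => // n _; apply: asym_congr (wdiff_asym _ n) _ _; first by exists 0%N.
by exists 0%N => z _ _; congr (_ / _ ^+ _); lia.
Qed.

Lemma wdiff_asym_seq X : asym_seq1 X (fun n z => w a b n z - w a b n.-1 z).
Proof.
case=> // n _; apply: littleo_bigO _ (bigO_wdiff X n).
by apply: bigO_littleo (wdiff_bigO X n.+1) (littleo_invX _ _); lia.
Qed.

Definition error_bigO X f n :=
  bigO X (fun z => f z - w a b n z) (fun z => (z ^+ (2 * n).+1)^-1).

Definition approx_order X f := forall n, error_bigO X f n.

Lemma error_bigO_pred X f n : error_bigO X f n.+1 -> error_bigO X f n.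
Proof.
move=> h; have le_n : ((2 * n).+1 <= (2 * n.+1).+1)%N by lia.
apply: bigO_trans (bigO_eq _) (bigOD (bigO_trans h (bigO_invX X le_n)) (wdiff_bigO X n)).
by exists 0%N => z _ _; rewrite /wdiff addrA subrK.
Qed.

Lemma error_bigO_le X f m n : (m <= n)%N -> error_bigO X f n -> error_bigO X f m.
Proof.
move=> /subnK <-; elim: (n - m)%N => // k IH.
by rewrite addSn => /error_bigO_pred; exact: IH.
Qed.

Lemma acf_expansion_approx_order X f : acf_expansion X f a b -> approx_order X f.
Proof. by move=> [_ h] n; apply: bigO_trans (h n) (wdiff_bigO X n). Qed.

Lemma approx_order_acf_expansion X f : approx_order X f -> acf_expansion X f a b.
Proof.
by move=> h; split=> [|n]; [exact: wdiff_asym_seq | exact: bigO_trans (h n) (bigO_wdiff X n)].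
Qed.

Lemma approx_order_error_asym X f : approx_order X f -> forall n,
  asym X (fun z => f z - w a b n z) (fun z => aprod a n.+1 / z ^+ (2 * n).+1).
Proof.
move=> h n.
have o : littleo X (fun z => f z - w a b n.+1 z) (fun z => aprod a n.+1 / z ^+ (2 * n).+1).
  apply: bigO_littleo (h n.+1) (littleo_bigO (littleo_invX _ _)
    (bigO_invX_cdiv _ _ (aprod_neq0 _ a_neq0))); lia.
apply: asym_congr (asymD_littleo (wdiff_asym X n) o) _ _; last by exists 0%N.
by exists 0%N => z _ _; rewrite /wdiff addrC addrA subrK.
Qed.

Lemma tail_expansion_approx_order X f : (forall n, (0 < n)%N -> exists fn : C -> C,
    (forall z, X z -> f z = cfr a b 1 n (fn z) z) /\ asym X fn (fun z => a n.+1 / z)) ->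
  approx_order X f.
Proof.
move=> h n; apply: error_bigO_pred; have [t [f_eq t_asym]] := h n.+1 erefl.
apply: bigO_trans (bigO_trans (asym_bigO (tail_error_asym f_eq t_asym)) (bigO_cdiv_invX _ _ _)).
by apply: bigO_eq; apply: near_inftyW (w_near_approxf X n.+1 b a_neq0) => z _ ->.
Qed.

Lemma error_asym_tail_expansion X f : (forall n, asym X (fun z => f z - w a b n z)
    (fun z => aprod a n.+1 / z ^+ (2 * n).+1)) ->
  forall n, (0 < n)%N -> exists fn : C -> C,
    (forall z, X z -> f z = cfr a b 1 n (fn z) z) /\ asym X fn (fun z => a n.+1 / z).
Proof.
move=> h n _; apply: (error_asym_tail n a_neq0) => m.
apply: asym_congr (h m) _ _; last by exists 0%N.
by apply: near_inftyW (w_near_approxf X m b a_neq0) => z _ ->.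
Qed.

Lemma approx_order_unique X f n (p q : {poly C}) : unbounded X -> approx_order X f ->
  q != 0 -> (size q <= n.+1)%N ->
  bigO X (fun z => f z - p.[z] / q.[z]) (fun z => (z ^+ (2 * n).+1)^-1) ->
  p%:F / q%:F = approx a b n.
Proof.
move=> X_unb f_ord q_neq0 sq pq_err.
have [q'_neq0 [_ ->]] := lrepP (approx a b n).
have [_ sq'] := size_lrep_approx n b a_neq0.
apply/eq_tofrac_div => //; apply: ratfunB_bigO_eq X_unb q_neq0 q'_neq0 sq _ _.
  by rewrite sq'.
apply: bigO_trans (bigO_eq _) (bigOB (f_ord n) pq_err).
by exists 0%N => z _ _; rewrite /w /reval; ring.
Qed.

Lemma approx_order_best X f n r : unbounded X -> approx_order X f -> (rdeg r <= n)%N ->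
  bigO X (fun z => f z - reval r z) (fun z => (z ^+ (2 * n).+1)^-1) -> r = approx a b n.
Proof.
move=> X_unb f_ord r_le r_err; have [q_neq0 [_ {1}->]] := lrepP r.
apply: approx_order_unique X_unb f_ord q_neq0 _ r_err.
exact: leq_trans (size_lrep_rdeg r).2 _.
Qed.

Lemma approx_order_pade X f n : unbounded X -> approx_order X f -> is_pade X f n (approx a b n).
Proof.
move=> X_unb f_ord; have [q_neq0 [_ e]] := lrepP (approx a b n).
have [s1 s2] := size_lrep_approx n b a_neq0.
split; last by move=> p q [q0 _ sq pq_err]; exact: approx_order_unique X_unb f_ord q0 sq pq_err.
exists (lrep (approx a b n)).1, (lrep (approx a b n)).2; split => //.
by split; [exact: q_neq0 | exact: s1 | rewrite s2 | exact: f_ord n].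
Qed.

Lemma pade_approx_order X f :
  (forall n, (0 < n)%N -> is_pade X f n (approx a b n)) -> approx_order X f.
Proof.
move=> hg n; apply: error_bigO_pred.
have [[p [q [[q_neq0 _ _ pq_err] e]]] _] := hg n.+1 erefl.
apply: bigO_trans (bigO_eq _) pq_err.
by apply: near_inftyW (reval_near X q_neq0 e) => z _ e'; rewrite /w e'.
Qed.

Lemma best_approxP X f r : unbounded X -> approx_order X f ->
  best_approx X f r <-> exists n, r = approx a b n.
Proof.
move=> X_unb f_ord; split=> [r_best|[n ->] v]; last first.
  rewrite rdeg_approx // => v_le v_err.
  exact: approx_order_best X_unb f_ord v_le (bigO_trans v_err (f_ord n)).
exists (rdeg r); set n := rdeg r; have [//|r_neq] := eqVneq r (approx a b n).
apply/esym; apply: r_best; first by rewrite rdeg_approx.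
have [q_neq0 [_ er]] := lrepP r; have [q'_neq0 [_ ea]] := lrepP (approx a b n).
have [_ sq'] := size_lrep_approx n b a_neq0.
have pq_neq : (lrep (approx a b n)).1 * (lrep r).2 != (lrep r).1 * (lrep (approx a b n)).2.
  apply: contraNneq r_neq => pq_eq; apply/eqP; rewrite er ea.
  by apply/eq_tofrac_div => //; exact/esym.
have sep := bigO_invX_ratfunB q'_neq0 q_neq0 (eq_leq sq') (size_lrep_rdeg r).2 pq_neq.
have r_err : asym X (fun z => f z - reval r z) (fun z => w a b n z - reval r z).
  apply: asym_of_littleo; apply: littleo_eq_norml (bigO_littleo (f_ord n)
    (littleo_bigO (littleo_invX _ (ltnSn (2 * n))) (bigO_restrict X sep))).
  by move=> z; congr `|_|; rewrite /w /reval; ring.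
apply: bigO_trans (f_ord n) (bigO_trans (bigO_invX X (leqnSn (2 * n))) _).
exact: bigO_trans (bigO_restrict X sep) (asym_bigO (asym_sym r_err)).
Qed.

End Expansion.
End Archimedean.

Lemma complex_archi (R : realType) (x : R[i]) : exists n : nat, `|x| < n%:R.
Proof.
rewrite normc_def; set s := Num.sqrt _; have s_ge0 : 0 <= s by exact: sqrtr_ge0.
by exists (Num.bound s); have := archi_boundP s_ge0; rewrite -(ltcR (R:=R)) rmorph_nat.
Qed.

Theorem theorem4p1 (R : realType) (a b : nat -> R[i])
  (ha : forall n, (0 < n)%N -> a n != 0) :
  (* (1) *)
  ((forall n, rdeg (approx a b n) = n) /\
   (forall n, (0 < n)%N ->
      asym (fun _ => True) (w a b n) (fun z => a 1%N / z) /\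
      asym (fun _ => True) (fun z => w a b n z - w a b n.-1 z)
           (fun z => (\prod_(1 <= i < n.+1) a i) / z ^+ (2 * n).-1)) /\
   asym_seq1 (fun _ => True) (fun n z => w a b n z - w a b n.-1 z)) /\
  (forall (X : R[i] -> Prop) (f : R[i] -> R[i]), unbounded X ->
   (* (2) *)
   [<-> (* (a) *) acf_expansion X f a b;
        (* (b) *) forall n, (0 < n)%N -> exists fn : R[i] -> R[i],
                    (forall z, X z -> f z = cfr a b 1 n (fn z) z) /\
                    asym X fn (fun z => a n.+1 / z);
        (* (c) *) forall n, asym X (fun z => f z - w a b n z)
                    (fun z => (\prod_(1 <= i < n.+2) a i) / z ^+ (2 * n).+1);
        (* (d) *) forall n, bigO X (fun z => f z - w a b n z)
                    (fun z => (z ^+ (2 * n).+1)^-1);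
        (* (e) *) forall m, exists2 n, (m <= n)%N &
                    bigO X (fun z => f z - w a b n z) (fun z => (z ^+ (2 * n).+1)^-1);
        (* (f) *) forall n, [/\ (rdeg (approx a b n) <= n)%N,
                    bigO X (fun z => f z - w a b n z) (fun z => (z ^+ (2 * n).+1)^-1) &
                    forall r, (rdeg r <= n)%N ->
                      bigO X (fun z => f z - reval r z) (fun z => (z ^+ (2 * n).+1)^-1) ->
                      r = approx a b n];
        (* (g) *) forall n, (0 < n)%N -> is_pade X f n (approx a b n)] /\
   (* (3) *)
   (acf_expansion X f a b ->
      forall r, best_approx X f r <-> exists n, r = approx a b n)).
Proof.
have archi := @complex_archi R.
split.
  split; first by move=> n; exact: (rdeg_approx archi n b ha).
  split; last exact: (wdiff_asym_seq archi b ha (fun _ => True)).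
  by move=> n n_gt0; split; [exact: (w_asym archi b ha n_gt0) |
    exact: (w_diff_asym archi b ha n_gt0)].
move=> X f X_unb; split; last first.
  by move=> /(acf_expansion_approx_order archi ha) f_ord r; exact: best_approxP.
tfae.
- move=> /(acf_expansion_approx_order archi ha)/(approx_order_error_asym archi ha).
  exact: error_asym_tail_expansion.
- by move=> /(tail_expansion_approx_order archi ha); exact: approx_order_error_asym.
- by move=> f_err n; exact: bigO_trans (asym_bigO (f_err n)) (bigO_cdiv_invX _ _ _).
- by move=> f_ord m; exists m.
- move=> f_cof; have f_ord : approx_order a b X f.
    by move=> n; have [k le_nk f_k] := f_cof n; exact: (error_bigO_le archi ha le_nk f_k).
  move=> n; split; [by rewrite (rdeg_approx archi n b ha) | exact: f_ord |].
  by move=> r; exact: (approx_order_best archi ha X_unb f_ord).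
- by move=> f_best n _; apply: (approx_order_pade archi ha n X_unb) => k; case: (f_best k).
- by move=> /(pade_approx_order archi ha); exact: approx_order_acf_expansion.
Qed.
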